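(* Let $k\ge1$. For every $\mathcal{C}_k$-algebra $(A,t)$: (i) every cyclic deductive system of $A$ is an intersection of maximal cyclic deductive systems of $A$; (ii) the intersection of all maximal cyclic deductive systems of $A$ equals $\{1\}$. Consequently, (iii) the variety of $\mathcal{C}_k$-algebras is semisimple (every subdirectly irreducible member is simple).
   Context: A modal pseudocomplemented De Morgan algebra ($mpM$-algebra) is an algebra $\langle A,\wedge,\vee,\sim,{}^\ast,0,1\rangle$ such that $\langle A,\wedge,\vee,\sim,0,1\rangle$ is a De Morgan algebra (bounded distributive lattice with $\sim\sim x=x$, $\sim(x\vee y)=\sim x\wedge\sim y$), $x^\ast$ is the pseudocomplement of $x$, and $x\vee\sim x\le x\vee x^\ast$. Put $\nabla x=\sim(\sim x\wedge x^\ast)$, $\triangle x=\sim\nabla\sim x$. A $\mathcal{C}_k$-algebra ($k\ge1$) is a pair $(A,t)$ with $A$ an $mpM$-algebra and $t$ an $mpM$-automorphism of $A$ with $t^k=\mathrm{id}$; these form a variety in the signature $(\wedge,\vee,\sim,{}^\ast,t,0,1)$. The cyclic implication is $a\rightharpoondown b=\bigvee_{i=1}^{k}\nabla(\sim t^i(a))\vee b$. A cyclic deductive system is a set $D\subseteq A$ with $1\in D$ such that $x,\,x\rightharpoondown y\in D$ imply $y\in D$; it is maximal if it is maximal among proper cyclic deductive systems. *)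

From Stdlib Require Import List Arith.
Import ListNotations.
Set Implicit Arguments.

Record mpM := MpM {
  car :> Type;
  meet : car -> car -> car;
  join : car -> car -> car;
  neg  : car -> car;
  star : car -> car;
  zero : car;
  one  : car;
  meet_assoc : forall x y z, meet x (meet y z) = meet (meet x y) z;
  join_assoc : forall x y z, join x (join y z) = join (join x y) z;
  meet_comm : forall x y, meet x y = meet y x;
  join_comm : forall x y, join x y = join y x;
  meet_absorb : forall x y, meet x (join x y) = x;
  join_absorb : forall x y, join x (meet x y) = x;
  meet_distr : forall x y z, meet x (join y z) = join (meet x y) (meet x z);
  join_zero : forall x, join x zero = x;
  meet_one : forall x, meet x one = x;
  neg_invol : forall x, neg (neg x) = x;
  neg_join : forall x y, neg (join x y) = meet (neg x) (neg y);
  star_pc : forall x y, meet y x = zero <-> meet y (star x) = y;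
  mpM_ax : forall x, meet (join x (neg x)) (join x (star x)) = join x (neg x)
}.

Arguments meet {m}. Arguments join {m}. Arguments neg {m}. Arguments star {m}.

Definition le (A : mpM) (x y : A) : Prop := meet x y = x.

Definition nabla (A : mpM) (x : A) : A := neg (meet (neg x) (star x)).
Arguments nabla {A}.
Definition delta (A : mpM) (x : A) : A := neg (nabla (neg x)).

Arguments delta {A}. Arguments le {A}.

Record CkAlg (k : nat) := CkA {
  alg :> mpM;
  tt : alg -> alg;
  t_meet : forall x y, tt (meet x y) = meet (tt x) (tt y);
  t_join : forall x y, tt (join x y) = join (tt x) (tt y);
  t_neg : forall x, tt (neg x) = neg (tt x);
  t_star : forall x, tt (star x) = star (tt x);
  t_zero : tt (zero alg) = zero alg;
  t_one : tt (one alg) = one alg;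
  t_bij : exists u : alg -> alg, (forall x, u (tt x) = x) /\ (forall x, tt (u x) = x);
  t_period : forall x, Nat.iter k tt x = x
}.

Arguments tt {k c}.

Section Ck.
Variable k : nat.
Variable A : CkAlg k.

Definition tpow (i : nat) (x : A) : A := Nat.iter i (@tt k A) x.

Definition cimp (a b : A) : A :=
  join (fold_right (fun i acc => join (nabla (neg (tpow i a))) acc) (zero A) (seq 1 k)) b.

Definition cyclic_ds (D : A -> Prop) : Prop :=
  D (one A) /\ forall x y, D x -> D (cimp x y) -> D y.

Definition proper (D : A -> Prop) : Prop := exists x, ~ D x.

Definition maximal_cds (D : A -> Prop) : Prop :=
  cyclic_ds D /\ proper D /\
  forall E, cyclic_ds E -> proper E -> (forall x, D x -> E x) -> forall x, E x -> D x.

Definition congruence (th : A -> A -> Prop) : Prop :=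
  (forall x, th x x) /\ (forall x y, th x y -> th y x) /\
  (forall x y z, th x y -> th y z -> th x z) /\
  (forall x x' y y', th x x' -> th y y' -> th (meet x y) (meet x' y')) /\
  (forall x x' y y', th x x' -> th y y' -> th (join x y) (join x' y')) /\
  (forall x x', th x x' -> th (neg x) (neg x')) /\
  (forall x x', th x x' -> th (star x) (star x')) /\
  (forall x x', th x x' -> th (tt x) (tt x')).

Definition nonidentity (th : A -> A -> Prop) : Prop := exists x y, x <> y /\ th x y.

Definition subdirectly_irreducible : Prop :=
  exists a b : A, a <> b /\
    forall th, congruence th -> nonidentity th -> th a b.

Definition simple : Prop :=
  (exists a b : A, a <> b) /\
  forall th, congruence th -> (forall x y, th x y -> x = y) \/ (forall x y, th x y).

End Ck.

Arguments tpow {k A}. Arguments cimp {k A}. Arguments cyclic_ds {k A}.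
Arguments proper {k A}. Arguments maximal_cds {k A}. Arguments congruence {k A}.
Arguments nonidentity {k A}. Arguments subdirectly_irreducible {k}. Arguments simple {k}.

(** For a C_k-algebra (A,t) put  box a := /\_{i=1..k} delta (t^i a), the "cyclic
  necessity" of a; the cyclic implication is then  a -> b = ~(box a) \/ b.  The
  values of box are complemented and t-fixed ("boolean fixed" elements), and
  box a <= a.  Hence a cyclic deductive system is the same thing as a lattice
  filter closed under box (a "box filter").

  (i),(ii)  By Zorn's lemma, a cyclic deductive system D missing x extends to one
  that is maximal among those missing x.  Such an M contains u or ~u for every
  boolean fixed u (otherwise the box filters generated by M,u and M,~u both meet
  x, and so M does), which forces M to be a maximal cyclic deductive system.
  Taking D = {1} gives (ii).

  (iii)  The 1-class of a congruence is a cyclic deductive system, and a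
  congruence with 1-class {1} is the identity.  Each maximal M yields the
  congruence  x psi_M y  iff  x /\ b = y /\ b  for a boolean fixed b in M, and
  distinct elements are separated by some psi_M.  In a subdirectly irreducible
  algebra some psi_M must therefore be the identity, which forces {1} = M to be
  maximal; so any congruence whose 1-class is not {1} has 1-class A, i.e. it is
  the total congruence. *)

From Stdlib Require Import List Arith Lia Classical.
From mathcomp Require classical_sets.
Set Implicit Arguments.

#[local] Arguments meet_assoc {m} x y z.
#[local] Arguments meet_comm {m} x y.
#[local] Arguments join_comm {m} x y.
#[local] Arguments meet_absorb {m} x y.
#[local] Arguments join_absorb {m} x y.
#[local] Arguments meet_distr {m} x y z.
#[local] Arguments join_zero {m} x.
#[local] Arguments meet_one {m} x.
#[local] Arguments neg_invol {m} x.
#[local] Arguments neg_join {m} x y.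
#[local] Arguments mpM_ax {m} x.

Lemma zorn_chain_union (T : Type) (P : (T -> Prop) -> Prop) :
  (forall F : (T -> Prop) -> Prop, (forall X, F X -> P X) ->
     (forall X Y, F X -> F Y -> (forall z, X z -> Y z) \/ (forall z, Y z -> X z)) ->
     P (fun z => exists2 X, F X & X z)) ->
  exists M, P M /\ forall N, (forall z, M z -> N z) -> P N -> forall z, N z -> M z.
Proof.
  intros Hchain.
  destruct (@classical_sets.Zorn_bigcup T P Hchain) as [M [PM Mmax]].
  exists M. split; [exact PM|]. intros N MN PN z Nz.
  apply NNPP; intro nMz. apply (Mmax N); [|exact PN].
  split; [exact MN|]. intro NM. exact (nMz (NM z Nz)).
Qed.

Section Lattice.
Context {A : mpM}.
Implicit Types x y z a b c d u v : A.

Lemma meet_idem x : meet x x = x.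
Proof. rewrite <- (join_absorb x x) at 2. apply meet_absorb. Qed.

Lemma le_refl x : le x x. Proof. apply meet_idem. Qed.
Lemma le_trans x y z : le x y -> le y z -> le x z.
Proof. unfold le; intros H1 H2. rewrite <- H1, <- meet_assoc, H2. reflexivity. Qed.
Lemma le_antisym x y : le x y -> le y x -> x = y.
Proof. unfold le; intros H1 H2. rewrite <- H1, meet_comm. exact H2. Qed.

Lemma meet_lb1 x y : le (meet x y) x.
Proof. unfold le. rewrite (meet_comm x y), <- meet_assoc, meet_idem. reflexivity. Qed.
Lemma meet_lb2 x y : le (meet x y) y.
Proof. unfold le. rewrite <- meet_assoc, meet_idem. reflexivity. Qed.
Lemma meet_glb x y z : le z x -> le z y -> le z (meet x y).
Proof. unfold le; intros H1 H2. rewrite meet_assoc, H1, H2. reflexivity. Qed.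
Lemma join_ub1 x y : le x (join x y).
Proof. apply meet_absorb. Qed.
Lemma join_ub2 x y : le y (join x y).
Proof. rewrite join_comm. apply meet_absorb. Qed.
Lemma meet_distr_r x y z : meet (join y z) x = join (meet y x) (meet z x).
Proof. rewrite meet_comm, meet_distr, (meet_comm x y), (meet_comm x z). reflexivity. Qed.
Lemma join_lub x y z : le x z -> le y z -> le (join x y) z.
Proof. unfold le; intros H1 H2. rewrite meet_distr_r, H1, H2. reflexivity. Qed.

Lemma le_join_eq x y : le x y -> join x y = y.
Proof. unfold le; intro H. rewrite <- H, join_comm, meet_comm. apply join_absorb. Qed.

Lemma le_zero x : le (zero A) x.
Proof. unfold le. rewrite <- (join_zero x) at 1. rewrite join_comm. apply meet_absorb. Qed.
Lemma le_one x : le x (one A).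
Proof. apply meet_one. Qed.
Lemma zero_of_le a : le a (zero A) -> a = zero A.
Proof. intro H. apply le_antisym; [exact H|apply le_zero]. Qed.
Lemma one_of_le a : le (one A) a -> a = one A.
Proof. intro H. apply le_antisym; [apply le_one|exact H]. Qed.
Lemma meet_zero x : meet x (zero A) = zero A.
Proof. rewrite meet_comm. apply le_zero. Qed.
Lemma join_one x : join x (one A) = one A.
Proof. apply le_join_eq, le_one. Qed.

Lemma le_meet1 x y z : le x z -> le (meet x y) z.
Proof. intro; eapply le_trans; [apply meet_lb1|assumption]. Qed.
Lemma le_meet2 x y z : le y z -> le (meet x y) z.
Proof. intro; eapply le_trans; [apply meet_lb2|assumption]. Qed.
Lemma le_join1 x y z : le z x -> le z (join x y).
Proof. intro; eapply le_trans; [eassumption|apply join_ub1]. Qed.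
Lemma le_join2 x y z : le z y -> le z (join x y).
Proof. intro; eapply le_trans; [eassumption|apply join_ub2]. Qed.
Lemma meet_mono a b c d : le a b -> le c d -> le (meet a c) (meet b d).
Proof. intros; apply meet_glb; [apply le_meet1|apply le_meet2]; assumption. Qed.
Lemma join_mono a b c d : le a b -> le c d -> le (join a c) (join b d).
Proof. intros; apply join_lub; [apply le_join1|apply le_join2]; assumption. Qed.

Lemma join_distr x y z : join x (meet y z) = meet (join x y) (join x z).
Proof.
  apply le_antisym.
  - apply join_lub; [apply meet_glb; apply join_ub1|].
    apply meet_mono; apply join_ub2.
  - rewrite meet_distr. apply join_lub; [apply le_meet2, join_ub1|].
    rewrite meet_distr_r. apply join_lub; [apply le_meet1, join_ub1|apply join_ub2].
Qed.

Lemma neg_meet x y : neg (meet x y) = join (neg x) (neg y).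
Proof. rewrite <- (neg_invol (join (neg x) (neg y))), neg_join, !neg_invol. reflexivity. Qed.
Lemma neg_anti x y : le x y -> le (neg y) (neg x).
Proof. intro H. apply le_join_eq in H. unfold le.
  rewrite <- H, neg_join, meet_comm, meet_assoc, meet_idem. reflexivity. Qed.
Lemma neg_anti' x y : le (neg x) (neg y) -> le y x.
Proof. intro H. apply neg_anti in H. rewrite !neg_invol in H. exact H. Qed.
Lemma neg_one : neg (one A) = zero A.
Proof. apply zero_of_le, neg_anti'. rewrite neg_invol. apply le_one. Qed.
Lemma neg_zero : neg (zero A) = one A.
Proof. rewrite <- neg_one, neg_invol. reflexivity. Qed.
Lemma neg_inj x y : neg x = neg y -> x = y.
Proof. intro H. rewrite <- (neg_invol x), H, neg_invol. reflexivity. Qed.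

Lemma star_meet x : meet x (star x) = zero A.
Proof. rewrite meet_comm. apply (proj2 (star_pc A x (star x))). apply le_refl. Qed.
Lemma le_star x y : meet y x = zero A -> le y (star x).
Proof. apply star_pc. Qed.
Lemma star_disjoint a p c : le a (star p) -> le c p -> le (meet a c) (zero A).
Proof. intros H1 H2. rewrite <- (star_meet p). apply meet_glb.
  - apply le_meet2, H2.
  - apply le_meet1, H1. Qed.

Lemma modal_le x : le (join x (neg x)) (join x (star x)).
Proof. unfold le. rewrite meet_comm, meet_comm. apply mpM_ax. Qed.
Lemma modal_dual x : le (meet (neg x) (neg (star x))) x.
Proof. pose proof (neg_anti (modal_le x)) as H. rewrite !neg_join in H.
  eapply le_trans; [exact H|]. rewrite neg_invol. apply meet_lb2. Qed.

(** ** Complemented elements: [~b] is a lattice complement of [b] *)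
Definition complemented b : Prop := join b (neg b) = one A /\ meet b (neg b) = zero A.

Lemma comp_neg b : complemented b -> complemented (neg b).
Proof. intros [H1 H2]. unfold complemented. rewrite neg_invol.
  split; [rewrite join_comm|rewrite meet_comm]; assumption. Qed.
Lemma comp_join a b : complemented a -> complemented b -> complemented (join a b).
Proof. intros [Ha1 Ha2] [Hb1 Hb2]. split.
  - apply one_of_le. rewrite neg_join, join_distr. apply meet_glb.
    + rewrite <- Ha1. apply join_mono; [apply join_ub1|apply le_refl].
    + rewrite <- Hb1. apply join_mono; [apply join_ub2|apply le_refl].
  - apply zero_of_le. rewrite neg_join, meet_distr_r. apply join_lub.
    + rewrite <- Ha2. apply meet_mono; [apply le_refl|apply meet_lb1].
    + rewrite <- Hb2. apply meet_mono; [apply le_refl|apply meet_lb2].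
Qed.
Lemma comp_meet a b : complemented a -> complemented b -> complemented (meet a b).
Proof. intros Ha Hb. pose proof (comp_neg (comp_join (comp_neg Ha) (comp_neg Hb))) as H.
  rewrite neg_join, !neg_invol in H. exact H. Qed.
Lemma comp_zero : complemented (zero A).
Proof. unfold complemented. rewrite neg_zero, join_comm, join_zero, meet_one. split; reflexivity. Qed.
Lemma comp_one : complemented (one A).
Proof. pose proof (comp_neg comp_zero) as H. rewrite neg_zero in H. exact H. Qed.

Lemma comp_star b : complemented b -> star (neg b) = b.
Proof. intros [H1 H2]. apply le_antisym.
  - rewrite <- (meet_one (star (neg b))), <- H1, meet_distr. apply join_lub; [apply meet_lb2|].
    eapply le_trans; [apply star_disjoint with (p := (neg b)); apply le_refl|apply le_zero].
  - apply le_star. exact H2.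
Qed.
Lemma comp_absorb b y : complemented b -> meet b (join (neg b) y) = meet b y.
Proof. intros [_ H]. rewrite meet_distr, H, join_comm, join_zero. reflexivity. Qed.
Lemma comp_absorb' b y : complemented b -> join (neg b) (meet b y) = join (neg b) y.
Proof. intros [H _]. rewrite join_distr, join_comm, H, meet_comm, meet_one. reflexivity. Qed.
Lemma comp_le_join b y : complemented b -> le b y -> join (neg b) y = one A.
Proof. intros [H _] Hb. apply one_of_le. rewrite <- H, join_comm.
  apply join_mono; [apply le_refl|exact Hb]. Qed.
Lemma comp_join_le b y : complemented b -> join (neg b) y = one A -> le b y.
Proof. intros Hc H. unfold le. rewrite <- (comp_absorb _ Hc), H, meet_one. reflexivity. Qed.

(** Meeting with [b] commutes with [^*], and with [~] when [b] is
    complemented; this makes "x /\ b = y /\ b" a congruence. *)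
Lemma neg_comp_meet x b : complemented b -> meet (neg x) b = meet (neg (meet x b)) b.
Proof. intros [_ H]. rewrite neg_meet, meet_distr_r, (meet_comm (neg b) b), H, join_zero.
  reflexivity. Qed.
Lemma star_meet_absorb x b : meet (star x) b = meet (star (meet x b)) b.
Proof. apply le_antisym; apply meet_glb; try apply meet_lb2; apply le_star, zero_of_le.
  - rewrite <- (star_meet x). apply meet_glb; [apply le_meet2, meet_lb1|apply le_meet1, meet_lb1].
  - rewrite <- (star_meet (meet x b)). apply meet_glb; [|apply le_meet1, meet_lb1].
    apply meet_glb; [apply le_meet2, le_refl|apply le_meet1, meet_lb2].
Qed.

(** ** The necessity operator  delta x = x /\ (~x)^* *)
Lemma deltaE x : delta x = meet x (star (neg x)).
Proof. unfold delta, nabla. rewrite !neg_invol. reflexivity. Qed.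
Lemma nabla_neg x : nabla (neg x) = neg (delta x).
Proof. unfold delta. rewrite neg_invol. reflexivity. Qed.

Lemma star_anti x y : le x y -> le (star y) (star x).
Proof. intro H. apply le_star, zero_of_le. apply star_disjoint with (p := y); [apply le_refl|exact H]. Qed.

Lemma delta_le x : le (delta x) x.
Proof. rewrite deltaE. apply meet_lb1. Qed.
Lemma delta_mono x y : le x y -> le (delta x) (delta y).
Proof. intro H. rewrite !deltaE. apply meet_mono; [exact H|apply star_anti, neg_anti, H]. Qed.
Lemma delta_meet x y : le (meet (delta x) (delta y)) (delta (meet x y)).
Proof.
  rewrite !deltaE. apply meet_glb; [apply meet_mono; apply meet_lb1|].
  apply le_star, zero_of_le. rewrite neg_meet, meet_distr. apply join_lub.
  - apply star_disjoint with (p := (neg x)); [apply le_meet1, meet_lb2|apply le_refl].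
  - apply star_disjoint with (p := (neg y)); [apply le_meet2, meet_lb2|apply le_refl].
Qed.

(** Every necessity [delta z] is complemented; this is where the modal axiom
    is used. *)
Lemma comp_delta z : complemented (delta z).
Proof.
  rewrite deltaE. set (p := star (neg z)).
  assert (Hzp : join z (neg p) = one A).
  { rewrite <- (neg_invol z) at 1. rewrite <- neg_meet. unfold p. rewrite star_meet. apply neg_zero. }
  assert (Hmodal : le z (join (neg z) p)).
  { eapply le_trans; [|apply (modal_le (neg z))]. rewrite neg_invol. apply join_ub2. }
  split.
  - apply one_of_le. rewrite <- Hzp, neg_meet. apply join_lub.
    + apply le_trans with (meet z (join (neg z) p)); [apply meet_glb; [apply le_refl|exact Hmodal]|].
      rewrite meet_distr. apply join_lub; [apply le_join2, le_join1, meet_lb2|apply le_join1, le_refl].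
    + apply le_join2, join_ub2.
  - apply zero_of_le. rewrite neg_meet, meet_distr. apply join_lub.
    + apply star_disjoint with (p := (neg z)); [apply meet_lb2|apply le_refl].
    + apply le_trans with (meet p (neg z)); [|apply star_disjoint with (p := (neg z)); apply le_refl].
      apply meet_glb; [apply le_meet1, meet_lb2|].
      eapply le_trans; [|apply (modal_dual (neg z))]. rewrite neg_invol.
      apply meet_mono; [apply meet_lb1|apply le_refl].
Qed.

Lemma delta_of_comp b : complemented b -> delta b = b.
Proof. intro H. rewrite deltaE, comp_star by exact H. apply meet_idem. Qed.
Lemma delta_one : delta (one A) = one A.
Proof. apply delta_of_comp, comp_one. Qed.

Lemma kleene_star x y : le (meet x (neg x)) (join y (star y)).
Proof.
  set (v := meet x y).
  apply le_trans with (meet x (join v (star v))).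
  - apply meet_glb; [apply meet_lb1|]. eapply le_trans; [|apply modal_le].
    apply le_meet2, le_join2, neg_anti, meet_lb1.
  - rewrite meet_distr. apply join_mono; [apply le_meet2, meet_lb2|].
    apply le_star, zero_of_le. rewrite <- (star_meet v), <- meet_assoc.
    apply meet_glb; [apply meet_glb; [apply meet_lb1|apply le_meet2, meet_lb2]|].
    apply le_meet2, meet_lb1.
Qed.

Lemma le_of_delta x y : le (delta x) y -> meet x (star y) = zero A -> le x y.
Proof.
  intros Hdelta Hstar.
  assert (Hsplit : le x (join (delta x) (meet x (neg x)))).
  { rewrite deltaE, <- meet_distr. apply meet_glb; [apply le_refl|].
    rewrite join_comm. eapply le_trans; [|apply (modal_le (neg x))].
    rewrite neg_invol. apply join_ub2. }
  eapply le_trans; [exact Hsplit|]. apply join_lub; [exact Hdelta|].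
  apply le_trans with (meet x (join y (star y))); [apply meet_glb; [apply meet_lb1|apply kleene_star]|].
  rewrite meet_distr, Hstar, join_zero. apply meet_lb2.
Qed.
End Lattice.

(** ** The cyclic necessity in a C_k-algebra *)
Section Cyclic.
Context {k : nat} (hk : 1 <= k) {A : CkAlg k}.
Implicit Types x y z a b u v : A.

Lemma tpow_S i x : tpow (S i) x = tt (tpow i x).
Proof. reflexivity. Qed.
Lemma tpow_comm i x : tpow i (tt x) = tt (tpow i x).
Proof. induction i as [|i IH]; [reflexivity|]. rewrite !tpow_S, IH. reflexivity. Qed.
Lemma tpow_meet i x y : tpow i (meet x y) = meet (tpow i x) (tpow i y).
Proof. induction i as [|i IH]; [reflexivity|]. rewrite !tpow_S, IH. apply t_meet. Qed.
Lemma tpow_one i : tpow i (one A) = one A.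
Proof. induction i as [|i IH]; [reflexivity|]. rewrite tpow_S, IH. apply t_one. Qed.
Lemma tpow_fix i u : tt u = u -> tpow i u = u.
Proof. intro H. induction i as [|i IH]; [reflexivity|]. rewrite tpow_S, IH. exact H. Qed.
Lemma t_mono x y : le x y -> le (tt x) (tt y).
Proof. unfold le. intro H. rewrite <- t_meet, H. reflexivity. Qed.
Lemma tpow_mono i x y : le x y -> le (tpow i x) (tpow i y).
Proof. intro H. induction i as [|i IH]; [exact H|]. rewrite !tpow_S. apply t_mono, IH. Qed.
Lemma t_nabla x : tt (nabla x) = nabla (tt x).
Proof. unfold nabla. rewrite t_neg, t_meet, t_star, t_neg. reflexivity. Qed.

(** As [t] has period [k], an element that [t] can only decrease is [t]-fixed. *)
Lemma t_fixed_of_le (c : A) : le (tt c) c -> tt c = c.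
Proof.
  intro Hdec. apply le_antisym; [exact Hdec|].
  assert (Hiter : forall n, le (tpow n c) c).
  { induction n as [|n IH]; [apply le_refl|].
    rewrite tpow_S. eapply le_trans; [apply t_mono, IH|exact Hdec]. }
  assert (Hperiod : tpow (S (k - 1)) c = c).
  { replace (S (k - 1)) with k by lia. apply t_period. }
  rewrite <- Hperiod at 1. apply t_mono, Hiter.
Qed.

(** [nbox l a] is the join of the  nabla (~ t^i a) = ~ delta (t^i a),  i in [l];
    for [l = 1..k] it is the antecedent part of the cyclic implication. *)
Definition nbox (l : list nat) (a : A) : A :=
  fold_right (fun i acc => join (nabla (neg (tpow i a))) acc) (zero A) l.

Lemma nbox_ub l i a : In i l -> le (neg (delta (tpow i a))) (nbox l a).
Proof. induction l as [|j l IH]; simpl; [tauto|]. rewrite nabla_neg.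
  intros [<-|Hi]; [apply join_ub1|apply le_join2, IH, Hi]. Qed.
Lemma nbox_lub l a u :
  (forall i, In i l -> le (neg (delta (tpow i a))) u) -> le (nbox l a) u.
Proof. induction l as [|j l IH]; simpl; intro H; [apply le_zero|]. rewrite nabla_neg.
  apply join_lub; [apply H; left; reflexivity|apply IH; intros i Hi; apply H; right; exact Hi].
Qed.
Lemma comp_nbox l a : complemented (nbox l a).
Proof. induction l as [|j l IH]; simpl; [apply comp_zero|].
  rewrite nabla_neg. apply comp_join; [apply comp_neg, comp_delta|exact IH]. Qed.
Lemma t_nbox l a : tt (nbox l a) = nbox l (tt a).
Proof. induction l as [|j l IH]; simpl; [apply t_zero|].
  rewrite t_join, IH, t_nabla, t_neg, tpow_comm. reflexivity. Qed.

(** The cyclic necessity  box a = /\_{i=1..k} delta (t^i a). *)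
Definition box (a : A) : A := neg (nbox (seq 1 k) a).

Lemma cimp_box a b : cimp a b = join (neg (box a)) b.
Proof. unfold box. rewrite neg_invol. reflexivity. Qed.
Lemma comp_box a : complemented (box a).
Proof. apply comp_neg, comp_nbox. Qed.

Lemma In_k : In k (seq 1 k).
Proof. apply in_seq. lia. Qed.

Lemma box_le a : le (box a) a.
Proof. unfold box. apply neg_anti'. rewrite neg_invol.
  eapply le_trans; [|apply (nbox_ub _ _ a In_k)].
  unfold tpow. rewrite t_period. apply neg_anti, delta_le. Qed.
Lemma box_one : box (one A) = one A.
Proof.
  assert (H : nbox (seq 1 k) (one A) = zero A).
  { apply zero_of_le, nbox_lub. intros i _. rewrite tpow_one, delta_one, neg_one. apply le_refl. }
  unfold box. rewrite H. apply neg_zero.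
Qed.
Lemma box_mono a b : le a b -> le (box a) (box b).
Proof. intro H. unfold box. apply neg_anti, nbox_lub. intros i Hi.
  eapply le_trans; [|apply (nbox_ub _ _ a Hi)]. apply neg_anti, delta_mono, tpow_mono, H. Qed.
Lemma box_meet a b : le (meet (box a) (box b)) (box (meet a b)).
Proof. unfold box. rewrite <- neg_join. apply neg_anti, nbox_lub. intros i Hi.
  rewrite tpow_meet. eapply le_trans; [apply neg_anti, delta_meet|].
  rewrite neg_meet. apply join_mono; apply nbox_ub, Hi. Qed.

(** [t] permutes the terms of [nbox (seq 1 k) a] cyclically, so it fixes [box a]. *)
Lemma t_box a : tt (box a) = box a.
Proof.
  unfold box. rewrite t_neg. f_equal. apply t_fixed_of_le.
  rewrite t_nbox. apply nbox_lub. intros i Hi. apply in_seq in Hi.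
  rewrite tpow_comm, <- tpow_S.
  destruct (Nat.eq_dec i k) as [->|Hne].
  - rewrite tpow_S. unfold tpow at 1. rewrite t_period.
    apply (nbox_ub _ 1 a). apply in_seq. lia.
  - apply nbox_ub. apply in_seq. lia.
Qed.

Definition boolean_fixed (u : A) : Prop := complemented u /\ tt u = u.

Lemma bf_box a : boolean_fixed (box a).
Proof. split; [apply comp_box|apply t_box]. Qed.
Lemma bf_neg u : boolean_fixed u -> boolean_fixed (neg u).
Proof. intros [H1 H2]. split; [apply comp_neg, H1|rewrite t_neg, H2; reflexivity]. Qed.
Lemma bf_meet u v : boolean_fixed u -> boolean_fixed v -> boolean_fixed (meet u v).
Proof. intros [H1 H2] [H3 H4].
  split; [apply comp_meet; assumption|rewrite t_meet, H2, H4; reflexivity]. Qed.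
Lemma bf_join u v : boolean_fixed u -> boolean_fixed v -> boolean_fixed (join u v).
Proof. intros [H1 H2] [H3 H4].
  split; [apply comp_join; assumption|rewrite t_join, H2, H4; reflexivity]. Qed.
Lemma bf_one : boolean_fixed (one A).
Proof. split; [apply comp_one|apply t_one]. Qed.
Lemma bf_zero : boolean_fixed (zero A).
Proof. split; [apply comp_zero|apply t_zero]. Qed.

Lemma box_of_bf u : boolean_fixed u -> box u = u.
Proof.
  intros [Hc Ht]. unfold box. rewrite <- (neg_invol u) at 2. f_equal.
  apply le_antisym.
  - apply nbox_lub. intros i _. rewrite (tpow_fix i Ht), (delta_of_comp Hc). apply le_refl.
  - pose proof (nbox_ub _ _ u In_k) as H. rewrite (tpow_fix k Ht), (delta_of_comp Hc) in H.
    exact H.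
Qed.

(** ** Cyclic deductive systems are box filters *)
Definition box_filter (D : A -> Prop) : Prop :=
  D (one A) /\ (forall x y, D x -> le x y -> D y) /\
  (forall x y, D x -> D y -> D (meet x y)) /\ (forall x, D x -> D (box x)).

(** Modus ponens for the cyclic implication yields upward closure, closure
    under [box], and (via  box x -> (box x /\ box y)) closure under meets. *)
Lemma cds_box_filter D : cyclic_ds D -> box_filter D.
Proof.
  intros [D1 MP].
  assert (Dup : forall x y, D x -> le x y -> D y).
  { intros x y Dx Hxy. apply (MP x y Dx). rewrite cimp_box, comp_le_join.
    - exact D1.
    - apply comp_box.
    - eapply le_trans; [apply box_le|exact Hxy]. }
  assert (Dbox : forall x, D x -> D (box x)).
  { intros x Dx. apply (MP x _ Dx). rewrite cimp_box, join_comm, (proj1 (comp_box x)). exact D1. }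
  split; [exact D1|]. split; [exact Dup|]. split; [|exact Dbox].
  intros x y Dx Dy. apply Dup with (meet (box x) (box y)).
  - apply (MP x _ Dx). rewrite cimp_box, (comp_absorb' _ (comp_box x)).
    apply Dup with (box y); [apply Dbox, Dy|apply join_ub2].
  - apply meet_mono; apply box_le.
Qed.

(** Conversely  box x /\ (~box x \/ y) <= y  gives modus ponens. *)
Lemma box_filter_cds D : box_filter D -> cyclic_ds D.
Proof.
  intros [D1 [Dup [Dmeet Dbox]]]. split; [exact D1|].
  intros x y Dx Dxy. rewrite cimp_box in Dxy.
  apply Dup with (meet (box x) y); [|apply meet_lb2].
  rewrite <- (comp_absorb y (comp_box x)). apply Dmeet; [apply Dbox, Dx|exact Dxy].
Qed.

Lemma box_filter_proper D : box_filter D -> proper D -> ~ D (zero A).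
Proof. intros [_ [Dup _]] [x nDx] D0. apply nDx, (Dup _ _ D0), le_zero. Qed.

End Cyclic.

(** ** Maximal cyclic deductive systems *)
Section Maximal.
Context {k : nat} (hk : 1 <= k) {A : CkAlg k}.
Implicit Types x y z a b u v : A.

Lemma cds_equiv (D E : A -> Prop) : (forall z, D z <-> E z) -> cyclic_ds D -> cyclic_ds E.
Proof. intros HDE [D1 MP]. split; [apply HDE, D1|].
  intros x y Ex Exy. apply HDE, (MP x y); apply HDE; assumption. Qed.

(** The union of a chain of cyclic deductive systems of the form  S \/ X  (and
    of [S] itself, for the empty chain) is a cyclic deductive system: any two of
    its elements already lie in one member. *)
Lemma chain_union_cds (S : A -> Prop) (F : (A -> Prop) -> Prop) :
  cyclic_ds S -> (forall X, F X -> cyclic_ds (fun z => S z \/ X z)) ->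
  (forall X Y, F X -> F Y -> (forall z, X z -> Y z) \/ (forall z, Y z -> X z)) ->
  cyclic_ds (fun z => S z \/ exists2 X, F X & X z).
Proof.
  intros HS HF Hchain.
  set (U := fun z => S z \/ exists2 X, F X & X z).
  assert (Hstage : forall X, F X -> forall z, S z \/ X z -> U z).
  { intros X FX z [Sz|Xz]; [left; exact Sz|right; exists X; assumption]. }
  assert (Hpair : forall a c, U a -> U c ->
            exists C, cyclic_ds C /\ (forall z, C z -> U z) /\ C a /\ C c).
  { intros a c [Sa|[X FX Xa]] [Sc|[Y FY Yc]].
    - exists S. split; [exact HS|]. split; [intros z Sz; left; exact Sz|auto].
    - exists (fun z => S z \/ Y z). split; [apply HF, FY|]. split; [apply Hstage, FY|auto].
    - exists (fun z => S z \/ X z). split; [apply HF, FX|]. split; [apply Hstage, FX|auto].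
    - destruct (Hchain X Y FX FY) as [XY|YX].
      + exists (fun z => S z \/ Y z). split; [apply HF, FY|]. split; [apply Hstage, FY|auto].
      + exists (fun z => S z \/ X z). split; [apply HF, FX|]. split; [apply Hstage, FX|auto]. }
  split; [left; apply HS|].
  intros a b Ua Uab. destruct (Hpair a (cimp a b) Ua Uab) as [C [[_ MPC] [CU [Ca Cab]]]].
  exact (CU b (MPC a b Ca Cab)).
Qed.

Definition maximal_avoiding (x : A) (M : A -> Prop) : Prop :=
  cyclic_ds M /\ ~ M x /\
  forall G, cyclic_ds G -> (forall z, M z -> G z) -> ~ G x -> forall z, G z -> M z.

Lemma exists_maximal_avoiding (D : A -> Prop) x : cyclic_ds D -> ~ D x ->
  exists M, maximal_avoiding x M /\ forall z, D z -> M z.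
Proof.
  intros HD nDx.
  set (P := fun X : A -> Prop => cyclic_ds (fun z => D z \/ X z) /\ ~ X x).
  destruct (@zorn_chain_union _ P) as [M0 [[HM0 nM0x] M0max]].
  - intros F FP Fchain. split.
    + apply chain_union_cds; [exact HD|intros X FX; apply (FP X FX)|exact Fchain].
    + intros [X FX Xx]. exact (proj2 (FP X FX) Xx).
  - exists (fun z => D z \/ M0 z). split; [|intros z Dz; left; exact Dz].
    split; [exact HM0|]. split; [intros [Dx|M0x]; [exact (nDx Dx)|exact (nM0x M0x)]|].
    intros G HG MG nGx z Gz. right. apply (M0max G); [intros w M0w; apply MG; right; exact M0w| |exact Gz].
    split; [|exact nGx]. refine (cds_equiv _ _ HG).
    intro w. split; [intro Gw; right; exact Gw|intros [Dw|Gw]; [apply MG; left; exact Dw|exact Gw]].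
Qed.

Definition gen_filter (M : A -> Prop) (u : A) : A -> Prop :=
  fun w => exists m, M m /\ le (meet u m) w.

Lemma gen_filter_box (M : A -> Prop) u :
  box_filter M -> boolean_fixed u -> box_filter (gen_filter M u).
Proof.
  intros [M1 [_ [Mmeet Mbox]]] Hu. split; [exists (one A); split; [exact M1|apply le_one]|].
  split; [intros a b [m [Mm Ha]] Hab; exists m; split; [exact Mm|eapply le_trans; eassumption]|].
  split.
  - intros a b [m [Mm Ha]] [m' [Mm' Hb]]. exists (meet m m'). split; [apply Mmeet; assumption|].
    apply meet_glb; [eapply le_trans; [|exact Ha]|eapply le_trans; [|exact Hb]];
      apply meet_mono; (apply le_refl || apply meet_lb1 || apply meet_lb2).
  - intros a [m [Mm Ha]]. exists (box m). split; [apply Mbox, Mm|].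
    rewrite <- (box_of_bf hk Hu) at 1. eapply le_trans; [apply box_meet|apply box_mono, Ha].
Qed.

(** A system maximal among those missing [x] contains [u] or [~u] for every
    boolean fixed [u]: otherwise the filters generated by [M,u] and [M,~u]
    both contain [x], hence so does [M]. *)
Lemma avoiding_prime x (M : A -> Prop) u :
  maximal_avoiding x M -> boolean_fixed u -> M u \/ M (neg u).
Proof.
  intros [HM [nMx Mmax]] Hu. pose proof (cds_box_filter hk HM) as HMf.
  pose proof HMf as [M1 [Mup [Mmeet _]]].
  assert (Hreach : forall v, boolean_fixed v -> ~ M v -> exists m, M m /\ le (meet v m) x).
  { intros v Hv nMv. apply NNPP; intro nGx. apply nMv, (Mmax (gen_filter M v)).
    - apply box_filter_cds, gen_filter_box; assumption.
    - intros z Mz. exists z. split; [exact Mz|apply meet_lb2].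
    - exact nGx.
    - exists (one A). split; [exact M1|apply meet_lb1]. }
  apply NNPP; intro H. apply not_or_and in H. destruct H as [nMu nMnu].
  destruct (Hreach u Hu nMu) as [m1 [Mm1 H1]].
  destruct (Hreach (neg u) (bf_neg Hu) nMnu) as [m2 [Mm2 H2]].
  apply nMx, (Mup (meet m1 m2)); [apply Mmeet; assumption|].
  rewrite <- (meet_one (meet m1 m2)), <- (proj1 (proj1 Hu)), meet_distr.
  apply join_lub; [eapply le_trans; [|exact H1]|eapply le_trans; [|exact H2]];
    (apply meet_glb; [apply meet_lb2|apply le_meet1]); (apply meet_lb1 || apply meet_lb2).
Qed.

(** ... and is therefore a maximal cyclic deductive system: a strictly larger
    one would contain some [box z] together with [~ box z], hence [0]. *)
Lemma avoiding_maximal x (M : A -> Prop) : maximal_avoiding x M -> maximal_cds M.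
Proof.
  intros HMx. pose proof HMx as [HM [nMx _]].
  split; [exact HM|]. split; [exists x; exact nMx|].
  intros E HE Eproper ME z Ez. apply NNPP; intro nMz.
  pose proof (cds_box_filter hk HE) as [_ [_ [Emeet Ebox]]].
  destruct (cds_box_filter hk HM) as [_ [Mup _]].
  apply (box_filter_proper (cds_box_filter hk HE) Eproper).
  rewrite <- (proj2 (comp_box z)). apply Emeet; [apply Ebox, Ez|apply ME].
  destruct (avoiding_prime HMx (bf_box hk z)) as [Mbz|Mnbz]; [|exact Mnbz].
  exfalso. apply nMz, (Mup _ _ Mbz), box_le, hk.
Qed.

Lemma extend_maximal (D : A -> Prop) x : cyclic_ds D -> ~ D x ->
  exists M, maximal_cds M /\ (forall z, D z -> M z) /\ ~ M x.
Proof.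
  intros HD nDx. destruct (exists_maximal_avoiding _ HD nDx) as [M [HMx DM]].
  exists M. split; [apply (avoiding_maximal HMx)|split; [exact DM|apply HMx]].
Qed.

Lemma cds_intersection_maximal (D : A -> Prop) : cyclic_ds D ->
  exists F : (A -> Prop) -> Prop,
    (forall M, F M -> maximal_cds M) /\ (forall x, D x <-> (forall M, F M -> M x)).
Proof.
  intros HD. exists (fun M => maximal_cds M /\ forall z, D z -> M z).
  split; [intros M [HM _]; exact HM|]. intro x. split.
  - intros Dx M [_ DM]. apply DM, Dx.
  - intro Hx. apply NNPP; intro nDx. destruct (extend_maximal _ HD nDx) as [M [HM [DM nMx]]].
    apply nMx, Hx. split; assumption.
Qed.

Lemma one_cds : cyclic_ds (fun z : A => z = one A).
Proof.
  apply box_filter_cds. split; [reflexivity|]. split; [intros a b -> Hb; apply one_of_le, Hb|].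
  split; [intros a b -> ->; apply meet_one|intros a ->; apply box_one].
Qed.

Lemma maximal_intersection_one x : (forall M, maximal_cds M -> M x) <-> x = one A.
Proof.
  split.
  - intro Hx. destruct (cds_intersection_maximal one_cds) as [F [HF HFx]].
    apply (proj2 (HFx x)). intros M FM. apply Hx, HF, FM.
  - intros -> M [[M1 _] _]. exact M1.
Qed.

End Maximal.

(** ** Congruences and semisimplicity *)
Section Congruences.
Context {k : nat} (hk : 1 <= k) {A : CkAlg k}.
Implicit Types x y z a b u v : A.

Lemma cong_delta (th : A -> A -> Prop) x y :
  congruence th -> th x y -> th (delta x) (delta y).
Proof.
  intros (_ & _ & _ & Hmeet & _ & Hneg & Hstar & _) Hxy. rewrite !deltaE.
  apply Hmeet; [exact Hxy|apply Hstar, Hneg, Hxy].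
Qed.

Lemma cong_box (th : A -> A -> Prop) x y : congruence th -> th x y -> th (box x) (box y).
Proof.
  intros Hth Hxy. pose proof Hth as (Hrefl & _ & _ & _ & Hjoin & Hneg & _ & Ht).
  assert (Hpow : forall i, th (tpow i x) (tpow i y)).
  { induction i as [|i IH]; [exact Hxy|]. rewrite !tpow_S. apply Ht, IH. }
  unfold box, nbox. apply Hneg. induction (seq 1 k) as [|i l IH]; simpl; [apply Hrefl|].
  rewrite !nabla_neg. apply Hjoin; [apply Hneg, cong_delta, Hpow; exact Hth|exact IH].
Qed.

Lemma cong_one_class_cds (th : A -> A -> Prop) :
  congruence th -> cyclic_ds (fun z => th z (one A)).
Proof.
  intros Hth. pose proof Hth as (Hrefl & _ & Htrans & Hmeet & Hjoin & _).
  apply box_filter_cds. split; [apply Hrefl|]. split; [|split].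
  - intros x y Hx Hxy. rewrite <- (le_join_eq Hxy).
    apply Htrans with (join (one A) y); [apply Hjoin; [exact Hx|apply Hrefl]|].
    rewrite join_comm, join_one. apply Hrefl.
  - intros x y Hx Hy. rewrite <- (meet_one (one A)). apply Hmeet; assumption.
  - intros x Hx. rewrite <- box_one. apply cong_box; assumption.
Qed.

(** A congruence whose 1-class is {1} is the identity: [x theta y] forces
    delta x <= y  and  x /\ y^* = 0, hence x <= y. *)
Lemma cong_identity (th : A -> A -> Prop) :
  congruence th -> (forall z, th z (one A) -> z = one A) -> forall x y, th x y -> x = y.
Proof.
  intros Hth Hone. pose proof Hth as (Hrefl & Hsym & _ & Hmeet & Hjoin & Hneg & Hstar & _).
  assert (Hle : forall x y, th x y -> le x y).
  { intros x y Hxy. apply le_of_delta.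
    - apply comp_join_le; [apply comp_delta|]. apply Hone.
      rewrite <- (comp_le_join (comp_delta y) (delta_le y)).
      apply Hjoin; [apply Hneg, cong_delta; assumption|apply Hrefl].
    - apply neg_inj. rewrite neg_zero. apply Hone.
      rewrite <- neg_zero, <- (star_meet y). apply Hneg, Hmeet; [exact Hxy|apply Hrefl]. }
  intros x y Hxy. apply le_antisym; apply Hle; [exact Hxy|apply Hsym, Hxy].
Qed.

Definition psi (M : A -> Prop) (x y : A) : Prop :=
  exists b, boolean_fixed b /\ M b /\ meet x b = meet y b.

Lemma meet_restrict x y b c : meet x b = meet y b -> meet x (meet b c) = meet y (meet b c).
Proof. intro H. rewrite !meet_assoc, H. reflexivity. Qed.

Lemma psi_common (M : A -> Prop) x x' y y' : box_filter M -> psi M x x' -> psi M y y' ->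
  exists b, boolean_fixed b /\ M b /\ meet x b = meet x' b /\ meet y b = meet y' b.
Proof.
  intros (_ & _ & Mmeet & _) (b1 & F1 & M1 & H1) (b2 & F2 & M2 & H2).
  exists (meet b1 b2). split; [apply bf_meet; assumption|]. split; [apply Mmeet; assumption|].
  split; [apply meet_restrict, H1|rewrite !(meet_comm b1); apply meet_restrict, H2].
Qed.

Lemma psi_congruence (M : A -> Prop) : box_filter M -> congruence (psi M).
Proof.
  intros HM. pose proof HM as (M1 & _).
  assert (Hunary : forall f : A -> A, (forall x b, boolean_fixed b -> meet (f x) b = meet (f (meet x b)) b) ->
            forall x x', psi M x x' -> psi M (f x) (f x')).
  { intros f Hf x x' (b & Fb & Mb & H). exists b. split; [exact Fb|split; [exact Mb|]].
    rewrite (Hf x b Fb), (Hf x' b Fb), H. reflexivity. }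
  split; [intro x; exists (one A); split; [apply bf_one|split; [exact M1|reflexivity]]|].
  split; [intros x y (b & Fb & Mb & H); exists b; auto|].
  split; [|split; [|split; [|split; [|split]]]].
  - intros x y z Hxy Hyz. destruct (psi_common HM Hxy Hyz) as (b & Fb & Mb & H1 & H2).
    exists b. split; [exact Fb|split; [exact Mb|]]. rewrite H1, H2. reflexivity.
  - intros x x' y y' Hx Hy. destruct (psi_common HM Hx Hy) as (b & Fb & Mb & H1 & H2).
    exists b. split; [exact Fb|split; [exact Mb|]].
    rewrite <- (meet_idem b), !meet_assoc, <- (meet_assoc x), <- (meet_assoc x'),
      (meet_comm y), (meet_comm y'), !meet_assoc, H1, <- !meet_assoc, H2. reflexivity.
  - intros x x' y y' Hx Hy. destruct (psi_common HM Hx Hy) as (b & Fb & Mb & H1 & H2).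
    exists b. split; [exact Fb|split; [exact Mb|]]. rewrite !meet_distr_r, H1, H2. reflexivity.
  - apply Hunary. intros x b (Hc & _). apply neg_comp_meet, Hc.
  - apply Hunary. intros x b _. apply star_meet_absorb.
  - apply Hunary. intros x b (_ & Ht). rewrite <- Ht at 1 3. rewrite <- !t_meet, <- meet_assoc, meet_idem. reflexivity.
Qed.

(** Distinct elements are separated by the congruence of some maximal system:
    the box filter of all [z >= ~b] with [x /\ b = y /\ b], [b] boolean fixed,
    misses [0], and a maximal system above it cannot relate [x] and [y]. *)
Lemma psi_separates x y : x <> y -> exists M, maximal_cds M /\ ~ psi M x y.
Proof.
  intros nxy.
  set (E := fun z => exists b, boolean_fixed b /\ le (neg b) z /\ meet x b = meet y b).
  assert (HE : box_filter E).
  { split; [exists (zero A); split; [apply bf_zero|split; [apply le_one|rewrite !meet_zero; reflexivity]]|].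
    split; [|split].
    - intros a c (b & Fb & Hb & Hxy) Hac. exists b. split; [exact Fb|split; [eapply le_trans; eassumption|exact Hxy]].
    - intros a c (b1 & F1 & H1 & E1) (b2 & F2 & H2 & E2). exists (join b1 b2).
      split; [apply bf_join; assumption|]. split; [rewrite neg_join; apply meet_mono; assumption|].
      rewrite !meet_distr, E1, E2. reflexivity.
    - intros a (b & Fb & Hb & Hxy). exists b. split; [exact Fb|split; [|exact Hxy]].
      rewrite <- (box_of_bf hk (bf_neg Fb)). apply box_mono, Hb. }
  assert (nE0 : ~ E (zero A)).
  { intros (b & _ & Hb & Hxy). apply nxy. apply zero_of_le in Hb.
    assert (b = one A) as -> by (rewrite <- (neg_invol b), Hb; apply neg_zero).
    rewrite !meet_one in Hxy. exact Hxy. }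
  destruct (extend_maximal hk _ (box_filter_cds HE) nE0) as (M & HM & EM & nM0).
  exists M. split; [exact HM|]. intros (b & Fb & Mb & Hxy).
  pose proof (cds_box_filter hk (proj1 HM)) as (_ & _ & Mmeet & _).
  apply nM0. rewrite <- (proj2 (proj1 Fb)). apply Mmeet; [exact Mb|].
  apply EM. exists b. split; [exact Fb|split; [apply le_refl|exact Hxy]].
Qed.

(** If [psi M] is the identity then [M = {1}]: each [z] in [M] agrees with [1]
    below [box z]. *)
Lemma psi_identity_one (M : A -> Prop) : maximal_cds M ->
  (forall x y, psi M x y -> x = y) -> forall z, M z -> z = one A.
Proof.
  intros (HM & _) Hid z Mz. pose proof (cds_box_filter hk HM) as (_ & _ & _ & Mbox).
  apply Hid. exists (box z). split; [apply (bf_box hk)|split; [apply Mbox, Mz|]].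
  rewrite (meet_comm (one A)), meet_one, meet_comm. apply (box_le hk).
Qed.

(** In a subdirectly irreducible algebra some [psi M] is the identity, since
    otherwise the monolith pair would be related by every [psi M]. *)
Lemma si_psi_identity : subdirectly_irreducible A ->
  exists M, maximal_cds M /\ forall x y, psi M x y -> x = y.
Proof.
  intros (a & b & nab & Hmono). apply NNPP; intro Hno. apply nab, NNPP; intro nab'.
  destruct (psi_separates nab') as (M & HM & nMab). apply nMab, Hmono.
  - apply psi_congruence, (cds_box_filter hk), (proj1 HM).
  - apply NNPP; intro Hid. apply Hno. exists M. split; [exact HM|].
    intros x y Hxy. apply NNPP; intro nxy. apply Hid. exists x, y. split; assumption.
Qed.

(** (iii) Subdirectly irreducible C_k-algebras are simple: {1} is a maximal
    cyclic deductive system, so a congruence with a proper 1-class is the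
    identity and any other congruence is total. *)
Lemma si_simple : subdirectly_irreducible A -> simple A.
Proof.
  intros Hsi. split; [destruct Hsi as (a & b & nab & _); exists a, b; exact nab|].
  destruct (si_psi_identity Hsi) as (M & HM & Hid).
  pose proof (psi_identity_one HM Hid) as Mone.
  intros th Hth. destruct (classic (proper (fun z => th z (one A)))) as [Hproper|Htotal].
  - left. apply (cong_identity Hth). intros z Hz. apply Mone.
    apply (proj2 (proj2 HM) _ (cong_one_class_cds Hth) Hproper); [|exact Hz].
    intros w Mw. rewrite (Mone w Mw). apply (proj1 Hth).
  - right. pose proof Hth as (_ & Hsym & Htrans & _).
    assert (Hone : forall z, th z (one A)).
    { intro z. apply NNPP; intro nz. apply Htotal. exists z. exact nz. }
    intros x y. apply Htrans with (one A); [apply Hone|apply Hsym, Hone].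
Qed.

End Congruences.

Theorem lemma3p3 (k : nat) (hk : 1 <= k) :
  (forall A : CkAlg k,
     (forall D : A -> Prop, cyclic_ds D ->
        exists F : (A -> Prop) -> Prop,
          (forall M, F M -> maximal_cds M) /\
          (forall x, D x <-> (forall M, F M -> M x))) /\
     (forall x : A, (forall M, maximal_cds M -> M x) <-> x = one A)) /\
  (forall A : CkAlg k, subdirectly_irreducible A -> simple A).
Proof.
  split.
  - intro A. split.
    + intros D HD. exact (cds_intersection_maximal hk HD).
    + exact (maximal_intersection_one hk).
  - intros A. exact (si_simple hk).
Qed.
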